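(* Let $q \in (0,1)$ and $p = 1-q$. For any $x \in \{0,1\}^n$, any $l \ge 1$, any $w \in \{0,1\}^l$, and any $z_0,\dots,z_{l-1} \in \mathbb{C}$, if $U$ denotes a random trace of $x$ with deletion probability $q$, then $$\mathbb{E}_x\left[p^{-1} \sum_{j_0 < \dots < j_{l-1}} \left(\prod_{i=0}^{l-1} 1_{U_{j_i} = w_i}\right)\left(\frac{z_0-q}{p}\right)^{j_0}\left(\prod_{i=1}^{l-1} \left(\frac{z_i-q}{p}\right)^{j_i-j_{i-1}-1}\right)\right] = \sum_{k_0 < \dots < k_{l-1}} \left(\prod_{i=0}^{l-1} 1_{x_{k_i}=w_i}\right) z_0^{k_0}\left(\prod_{i=1}^{l-1} z_i^{k_i-k_{i-1}-1}\right),$$ where the sums run over strictly increasing tuples of indices in $\{0,\dots,n-1\}$.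
   Context: A trace of $x \in \{0,1\}^n$ is obtained by deleting each bit of $x$ independently with probability $q$ and concatenating the remaining bits in order. Strings are indexed starting at $0$. For a trace $U$ and an index $j$ not less than the length of $U$, $U_j$ is defined to be $2$, so that the events $U_j = 0$ and $U_j = 1$ are both false. $\mathbb{E}_x$ denotes expectation over the random trace $U$ of $x$. The convention $0^0 = 1$ is used. *)

From mathcomp Require Import all_boot all_order all_algebra.
Set Implicit Arguments. Unset Strict Implicit. Unset Printing Implicit Defensive.
Import Order.TTheory GRing.Theory Num.Theory.
Local Open Scope ring_scope.

(* A deletion pattern m : {ffun 'I_n -> bool}; m i = true means bit i is kept.
   The trace of x under m: the kept bits, in order. *)
Definition trace (n : nat) (x : n.-tuple bool) (m : {ffun 'I_n -> bool}) : seq bool :=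
  [seq tnth x i | i <- enum 'I_n & m i].

(* U_j as a value in {0,1,2}: 2 when j >= |U|. *)
Definition trace_at (U : seq bool) (j : nat) : nat :=
  if (j < size U)%N then nat_of_bool (nth false U j) else 2%N.

Definition trace_prob (C : nzRingType) (n : nat) (q : C) (m : {ffun 'I_n -> bool}) : C :=
  (1 - q) ^+ #|[pred i | m i]| * q ^+ #|[pred i | ~~ m i]|.

Definition trace_expect (C : nzRingType) (n : nat) (q : C) (x : n.-tuple bool)
    (f : seq bool -> C) : C :=
  \sum_(m : {ffun 'I_n -> bool}) trace_prob q m * f (trace x m).

Definition increasing (l n : nat) (j : {ffun 'I_l -> 'I_n}) : bool :=
  [forall i1 : 'I_l, forall i2 : 'I_l, (i1 < i2)%N ==> (j i1 < j i2)%N].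

Definition gap (l n : nat) (j : {ffun 'I_l -> 'I_n}) (i : 'I_l) : nat :=
  let s := [seq val (j k) | k <- enum 'I_l] in
  if val i == 0%N then val (j i) else (val (j i) - nth 0%N s (val i).-1 - 1)%N.

Definition pattern_weight (C : nzRingType) (l n : nat) (z : 'I_l -> C)
    (j : {ffun 'I_l -> 'I_n}) : C :=
  \prod_(i < l) z i ^+ gap j i.

From mathcomp Require Import all_boot all_order all_algebra.
From mathcomp Require Import ring.
Import Order.TTheory GRing.Theory Num.Theory.
Local Open Scope ring_scope.

(** Write [E(s, w, y)] for the generating function of the occurrences of [w]
  as a subsequence of [s], in which each position skipped before the match of
  [w_i] is weighted by [y_i]. The right-hand side is [E(x, w, z)], and for each
  trace [U] the inner sum on the left is [E(U, w, y)] with [y_i = (z_i - q)/p].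
  Whether the first bit of [s] is skipped or matched gives [E] a first-step
  recursion, and whether it survives in the trace gives one for the expectation
  over traces; as [p y_i + q = z_i], the two combine, by induction on [s], into
  [E_s[E(U, w, y)] = p^l E(s, w, z)]. *)

Section FfunCons.
Variables (T : finType) (n : nat).

Definition ffun_cons (t : T) (f : {ffun 'I_n -> T}) : {ffun 'I_n.+1 -> T} :=
  [ffun i => if unlift ord0 i is Some k then f k else t].

Lemma ffun_cons0 t f : ffun_cons t f ord0 = t.
Proof. by rewrite ffunE unlift_none. Qed.

Lemma ffun_cons_lift t f i : ffun_cons t f (lift ord0 i) = f i.
Proof. by rewrite ffunE liftK. Qed.

Lemma big_ffun_ordS (R : nmodType) (F : {ffun 'I_n.+1 -> T} -> R) :
  \sum_f F f = \sum_(t : T) \sum_(f : {ffun 'I_n -> T}) F (ffun_cons t f).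
Proof.
rewrite pair_big (reindex (fun p : T * {ffun 'I_n -> T} => ffun_cons p.1 p.2)) //.
apply: onW_bij.
exists (fun f : {ffun 'I_n.+1 -> T} => (f ord0, [ffun k => f (lift ord0 k)])).
- case=> t f /=; rewrite ffun_cons0; congr (_, _).
  by apply/ffunP=> k; rewrite ffunE ffun_cons_lift.
- move=> f; apply/ffunP=> i; rewrite ffunE /=.
  by case: unliftP => [k ->|->]; rewrite ?ffunE.
Qed.

End FfunCons.

Arguments ffun_cons {T n}.

Section TraceMean.
Variables (C : comNzRingType) (q : C).

Fixpoint trace_mean (s : seq bool) (f : seq bool -> C) : C :=
  if s is a :: s' then
    (1 - q) * trace_mean s' (fun U => f (a :: U)) + q * trace_mean s' f
  else f [::].

Lemma eq_in_trace_mean s f g :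
  (forall U, subseq U s -> f U = g U) -> trace_mean s f = trace_mean s g.
Proof.
elim: s f g => [|a s IHs] f g fg /=; first exact: fg.
congr (_ * _ + _ * _); apply: IHs => U sub_U; apply: fg; first by rewrite /= eqxx.
exact: subseq_trans sub_U (subseq_cons s a).
Qed.

Lemma trace_mean_const s c : trace_mean s (fun _ => c) = c.
Proof. by elim: s => [|a s IHs] //=; rewrite IHs -mulrDl subrK mul1r. Qed.

Lemma trace_mean_lin s c1 c2 f g :
  trace_mean s (fun U => c1 * f U + c2 * g U) =
  c1 * trace_mean s f + c2 * trace_mean s g.
Proof.
elim: s f g => [|a s IHs] f g //=.
rewrite (IHs (fun U => f (a :: U)) (fun U => g (a :: U))) IHs.
by ring.
Qed.

Lemma trace_meanZ s c f : trace_mean s (fun U => c * f U) = c * trace_mean s f.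
Proof.
rewrite -[RHS]addr0 -(mul0r (trace_mean s f)) -trace_mean_lin.
by apply: eq_in_trace_mean => U _; rewrite mul0r addr0.
Qed.

Lemma mask_sum_trace_mean n (h : 'I_n -> bool) (f : seq bool -> C) :
  \sum_(m : {ffun 'I_n -> bool})
     (\prod_(i < n) (if m i then 1 - q else q)) * f [seq h i | i <- enum 'I_n & m i]
  = trace_mean [seq h i | i <- enum 'I_n] f.
Proof.
elim: n h f => [|n IHn] h f.
  rewrite enum_ord0 /=; under eq_bigr do rewrite big_ord0 mul1r.
  by rewrite sumr_const card_ffun !card_ord.
rewrite big_ffun_ordS big_bool enum_ordSl /= -map_comp -!IHn !mulr_sumr.
congr (_ + _); apply: eq_bigr => m _;
  rewrite big_ord_recl ffun_cons0 /= filter_map -map_comp -mulrA;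
  under eq_bigr do rewrite ffun_cons_lift;
  by rewrite (@eq_filter _ (preim (lift ord0) (ffun_cons _ m)) m) // => i /=;
     rewrite ffun_cons_lift.
Qed.

Lemma trace_expectE n (x : n.-tuple bool) f : trace_expect q x f = trace_mean x f.
Proof.
rewrite /trace_expect -[in RHS](map_tnth_enum x) -mask_sum_trace_mean.
apply: eq_bigr => m _; congr (_ * _).
rewrite /trace_prob (bigID m) /= -!prodr_const.
by congr (_ * _); apply: eq_bigr => i /[!inE]; [move=> -> | move=> /negbTE ->].
Qed.

End TraceMean.

Arguments trace_mean {C}.

Section EmbedGF.
Variable C : nzRingType.

(* [embed_gf s w ys] is [E(s, w, ys)]; [head ys] is the variable of the current gap. *)
Fixpoint embed_gf (s w : seq bool) (ys : seq C) : C :=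
  if w is w0 :: w' then
    if s is a :: s' then
      head 0 ys * embed_gf s' w ys + (a == w0)%:R * embed_gf s' w' (behead ys)
    else 0
  else 1.

Lemma embed_gf_nil s ys : embed_gf s [::] ys = 1.
Proof. by case: s. Qed.

End EmbedGF.

Arguments embed_gf {C}.

(* A missing gap variable defaults to [0], and [(0 - q) / (1 - q) != 0]. *)
Lemma trace_mean_embed_gf (F : fieldType) (q : F) s w (zs : seq F) :
  1 - q != 0 -> (size w <= size zs)%N ->
  trace_mean q s (fun U => embed_gf U w [seq (z - q) / (1 - q) | z <- zs]) =
  (1 - q) ^+ size w * embed_gf s w zs.
Proof.
move=> p_neq0; elim: s w zs => [|a s IHs] [|w0 w] zs size_w.
- by rewrite /= expr0 mulr1.
- by rewrite /= mulr0.
- under eq_in_trace_mean => U _ do rewrite embed_gf_nil.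
  by rewrite trace_mean_const embed_gf_nil expr0 mulr1.
case: zs size_w => [|z0 zs] //= size_w.
rewrite trace_mean_lin (IHs (w0 :: w) (z0 :: zs)) // IHs //= exprS.
by field.
Qed.

Lemma subseq_iotaE (K : seq nat) b m :
  subseq K (iota b m) = sorted ltn K && all (fun k => b <= k < b + m)%N K.
Proof.
apply/idP/andP => [sub_K | [sorted_K /allP K_range]].
  split; first exact: (subseq_sorted ltn_trans sub_K (iota_ltn_sorted b m)).
  by apply/allP => k /(mem_subseq sub_K); rewrite mem_iota.
apply/(subseq_uniqP (iota_uniq b m)).
apply: (irr_sorted_eq ltn_trans ltnn) => //.
  exact: (sorted_filter ltn_trans _ (iota_ltn_sorted b m)).
move=> k; rewrite mem_filter mem_iota /=.
by case K_k: (k \in K); rewrite /= ?K_range.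
Qed.

Lemma cons_inj (T : Type) (x : T) : injective (cons x).
Proof. by move=> s1 s2 []. Qed.

Fixpoint incr_seqs (b m l : nat) : seq (seq nat) :=
  match l, m with
  | 0, _ => [:: [::]]
  | _.+1, 0 => [::]
  | l'.+1, m'.+1 => [seq b :: K | K <- incr_seqs b.+1 m' l'] ++ incr_seqs b.+1 m' l
  end.

Lemma mem_incr_seqs b m l K :
  (K \in incr_seqs b m l) = (size K == l) && subseq K (iota b m).
Proof.
elim: m b l K => [|m IHm] b [|l] [|k K] //=; rewrite ?inE ?andbF //.
  by rewrite mem_cat IHm orbF; apply/negbTE/mapP => -[].
rewrite mem_cat IHm /= eqSS.
have [-> | k_neq_b] := eqVneq k b.
  rewrite (mem_map (@cons_inj _ b)) IHm.
  case sub_bK: (subseq (b :: K) (iota b.+1 m)); last by rewrite !andbF orbF.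
  by have := mem_subseq sub_bK (mem_head b K); rewrite mem_iota ltnn.
suff /negbTE -> : k :: K \notin [seq b :: K' | K' <- incr_seqs b.+1 m l] by [].
by apply/mapP => -[K' _ [k_eq_b _]]; rewrite k_eq_b eqxx in k_neq_b.
Qed.

Lemma uniq_incr_seqs b m l : uniq (incr_seqs b m l).
Proof.
elim: m b l => [|m IHm] b [|l] //=.
rewrite cat_uniq (map_inj_uniq (@cons_inj _ b)) !IHm andbT /=.
apply/hasPn => K; rewrite mem_incr_seqs => /andP[_ sub_K].
apply/mapP => -[K' _ K_eq]; move: sub_K; rewrite K_eq.
by move=> /mem_subseq/(_ b (mem_head _ _)); rewrite mem_iota ltnn.
Qed.

Section EmbedWeight.
Variables (C : comNzRingType) (s : seq bool).

(* The term of [embed_gf (drop b s) w ys] coming from the occurrence at [K]. *)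
Fixpoint embed_weight (b : nat) (K : seq nat) (w : seq bool) (ys : seq C) : C :=
  if K is k :: K' then
    (trace_at s k == head false w)%:R * head 0 ys ^+ (k - b) *
    embed_weight k.+1 K' (behead w) (behead ys)
  else 1.

Lemma embed_weight_shift b k K w ys : (b < k)%N ->
  embed_weight b (k :: K) w ys = head 0 ys * embed_weight b.+1 (k :: K) w ys.
Proof.
by move=> lt_bk; rewrite /= -(subnSK lt_bk) exprS !mulrA [_ * head 0 ys]mulrC.
Qed.

Lemma embed_weightE b K w ys :
  embed_weight b K w ys =
  \prod_(i < size K) ((trace_at s (nth 0%N K i) == nth false w i)%:R *
    nth 0 ys i ^+ (nth 0%N K i - (if i == 0%N :> nat then b else (nth 0%N K i.-1).+1))).
Proof.
elim: K b w ys => [|k K IHK] b w ys /=; first by rewrite big_ord0.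
rewrite big_ord_recl IHK /= !nth0; congr (_ * _).
by apply: eq_bigr => -[[|i] lt_i] _; rewrite /= !nth_behead.
Qed.

Lemma embed_gf_dropS b w0 w (ys : seq C) :
  embed_gf (drop b s) (w0 :: w) ys =
  head 0 ys * embed_gf (drop b.+1 s) (w0 :: w) ys +
  (trace_at s b == w0)%:R * embed_gf (drop b.+1 s) w (behead ys).
Proof.
rewrite /trace_at; case: ltnP => [lt_bs | le_sb].
  by rewrite (drop_nth false lt_bs) /=; case: (nth _ _ _); case: w0.
rewrite !drop_oversize ?(leq_trans le_sb) //=.
by case: w0; rewrite mulr0 mul0r addr0.
Qed.

Lemma sum_embed_weight b m w ys : (size s <= b + m)%N ->
  \sum_(K <- incr_seqs b m (size w)) embed_weight b K w ys = embed_gf (drop b s) w ys.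
Proof.
elim: m b w ys => [|m IHm] b [|w0 w] ys size_s /=; rewrite ?big_seq1 ?embed_gf_nil //.
  by rewrite big_nil drop_oversize // -(addn0 b).
rewrite -addSnnS in size_s.
rewrite big_cat big_map /= subnn expr0 mulr1 -mulr_sumr IHm //.
rewrite (eq_big_seq (fun K => head 0 ys * embed_weight b.+1 K (w0 :: w) ys)).
  by rewrite -mulr_sumr (IHm _ (w0 :: w)) // [RHS]embed_gf_dropS addrC.
case=> [|k K]; rewrite mem_incr_seqs // => /andP[_ /mem_subseq/(_ k (mem_head _ _))].
by rewrite mem_iota => /andP[lt_bk _]; apply: embed_weight_shift.
Qed.

End EmbedWeight.

Arguments embed_weight {C}.

Section IncreasingFfun.
Context {l n : nat}.
Implicit Type j : {ffun 'I_l -> 'I_n}.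

Definition ffun_seq j : seq nat := [seq val (j k) | k <- enum 'I_l].

Lemma size_ffun_seq j : size (ffun_seq j) = l.
Proof. by rewrite size_map size_enum_ord. Qed.

Lemma nth_ffun_seq j (i : 'I_l) : nth 0%N (ffun_seq j) i = j i.
Proof. by rewrite (nth_map i) ?size_enum_ord // nth_ord_enum. Qed.

Lemma ffun_seq_inj : injective ffun_seq.
Proof.
move=> j1 j2 eq_j; apply/ffunP => i; apply/val_inj.
by rewrite /= -!nth_ffun_seq eq_j.
Qed.

Lemma increasingE j : increasing j = sorted ltn (ffun_seq j).
Proof.
rewrite sorted_pairwise; last exact: ltn_trans.
apply/forallP/(pairwiseP 0%N) => [inc i1 i2 | inc i1].
  rewrite !inE size_ffun_seq => lt_i1 lt_i2.
  have /forallP/(_ (Ordinal lt_i2))/implyP := inc (Ordinal lt_i1).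
  by rewrite (nth_ffun_seq j (Ordinal lt_i1)) (nth_ffun_seq j (Ordinal lt_i2)).
apply/'forall_implyP => i2 lt_i12.
by rewrite -!nth_ffun_seq; apply: inc; rewrite ?inE ?size_ffun_seq.
Qed.

Lemma big_increasing (R : nmodType) (F : seq nat -> R) :
  \sum_(j | increasing j) F (ffun_seq j) = \sum_(K <- incr_seqs 0 n l) F K.
Proof.
rewrite -big_filter -(big_map ffun_seq xpredT); apply/perm_big/uniq_perm.
- by rewrite (map_inj_uniq ffun_seq_inj) filter_uniq ?index_enum_uniq.
- exact: uniq_incr_seqs.
move=> K; rewrite mem_incr_seqs subseq_iotaE add0n.
apply/mapP/and3P => [[j] | [/eqP size_K sorted_K /allP K_lt_n]].
  rewrite mem_filter => /andP[inc_j _] ->.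
  rewrite size_ffun_seq -increasingE inc_j; split=> //.
  by apply/allP => _ /mapP[i _ ->]; rewrite ltn_ord.
have lt_n (i : 'I_l) : (nth 0%N K i < n)%N.
  have lt_i_size : (i < size K)%N by rewrite size_K.
  by have /K_lt_n/andP[] := mem_nth 0%N lt_i_size.
pose j := [ffun i => Ordinal (lt_n i)].
have K_eq : K = ffun_seq j.
  apply: (@eq_from_nth _ 0%N) => [|i]; rewrite size_K ?size_ffun_seq // => lt_il.
  by rewrite (nth_ffun_seq j (Ordinal lt_il)) ffunE.
by exists j; rewrite // mem_filter mem_index_enum increasingE -K_eq sorted_K.
Qed.

End IncreasingFfun.

Lemma embed_weight_ffun_seq {C : comNzRingType} {l n : nat} U
    (w : l.-tuple bool) (y : 'I_l -> C) (j : {ffun 'I_l -> 'I_n}) :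
  (\prod_(i < l) (trace_at U (j i) == nat_of_bool (tnth w i))%:R) *
  pattern_weight y j = embed_weight U 0 (ffun_seq j) w [seq y i | i <- enum 'I_l].
Proof.
rewrite /pattern_weight -big_split embed_weightE size_ffun_seq.
apply: eq_bigr => i _.
rewrite nth_ffun_seq (tnth_nth false) (nth_map i) ?size_enum_ord //.
rewrite nth_ord_enum /gap -/(ffun_seq j) /=; congr (_ * _ ^+ _).
by case: (_ == 0%N); rewrite ?subn0 // -subnDA addn1.
Qed.

Lemma sum_increasing_embed_gf {C : comNzRingType} {l n : nat} U
    (w : l.-tuple bool) (y : 'I_l -> C) : (size U <= n)%N ->
  \sum_(j : {ffun 'I_l -> 'I_n} | increasing j)
     (\prod_(i < l) (trace_at U (j i) == nat_of_bool (tnth w i))%:R) *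
     pattern_weight y j =
  embed_gf U w [seq y i | i <- enum 'I_l].
Proof.
move=> size_U; under eq_bigr do rewrite embed_weight_ffun_seq.
rewrite (big_increasing _ (fun K => embed_weight U 0 K w _)).
by rewrite -[X in incr_seqs _ _ X](size_tuple w) sum_embed_weight ?drop0.
Qed.

Theorem proposition2 (C : numClosedFieldType) (q : C) (n l : nat)
    (x : n.-tuple bool) (w : l.-tuple bool) (z : 'I_l -> C) :
  0 < q < 1 -> (1 <= l)%N ->
  let p := 1 - q in
  trace_expect q x (fun U =>
     p ^- l *
     \sum_(j : {ffun 'I_l -> 'I_n} | increasing j)
        (\prod_(i < l) (trace_at U (j i) == nat_of_bool (tnth w i))%:R) *
        pattern_weight (fun i => (z i - q) / p) j)
  = \sum_(j : {ffun 'I_l -> 'I_n} | increasing j)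
        (\prod_(i < l) (tnth x (j i) == tnth w i)%:R) * pattern_weight z j.
Proof.
move=> /andP[_ q_lt1] _ p.
have p_neq0 : p != 0 by rewrite subr_eq0 eq_sym lt_eqF.
have size_x : (size x <= n)%N by rewrite size_tuple.
have trace_at_x (k : 'I_n) b : (trace_at x k == nat_of_bool b) = (tnth x k == b).
  by rewrite /trace_at size_tuple ltn_ord -tnth_nth; case: (tnth x k); case: b.
under [RHS]eq_bigr do under eq_bigr do rewrite -trace_at_x.
rewrite sum_increasing_embed_gf // trace_expectE.
under eq_in_trace_mean => U /size_subseq/leq_trans/(_ size_x) size_U
  do rewrite sum_increasing_embed_gf //.
rewrite trace_meanZ (map_comp (fun c => (c - q) / p) z) trace_mean_embed_gf //.
  by rewrite size_tuple mulrA mulVf ?mul1r // expf_neq0.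
by rewrite size_tuple size_map size_enum_ord.
Qed.
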